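(* Let $(x_n)_{n\ge0}$ be an infinite path in $\Gamma$ with $\ell(x_n)=n$, let $z$ be nonreal, and let $v_z,u_z:\Gamma\to\mathbb C$ satisfy $v_z(x_0)=1$, $v_z(x_1)=(z-\beta_{x_0})/\lambda_{x_0}$, $u_z(x_0)=0$, $u_z(x_1)=1/\lambda_{x_0}$, and $(Jv_z)(x)=zv_z(x)$, $(Ju_z)(x)=zu_z(x)$ for all $x\in\Gamma\setminus\{x_0\}$. Then for every $n\ge0$, $$v_z(x_n)u_z(x_{n+1})-u_z(x_n)v_z(x_{n+1})=\frac{1}{\lambda_{x_n}}.$$
   Context: Let $\Gamma$ be an infinite connected tree whose vertices are arranged in levels $\ell(x)\in\{0,1,2,\dots\}$: every vertex $x$ is adjacent to exactly one vertex $x'$ with $\ell(x')=\ell(x)+1$; for $\ell(x)\ge 1$ the set $N_x=\{y:\ y'=x\}$ of neighbours of $x$ on level $\ell(x)-1$ is finite and nonempty; $N_x=\emptyset$ if $\ell(x)=0$; there are no other edges. Fix $\lambda_x>0$, $\beta_x\in\mathbb R$. The Jacobi matrix $J$ acts on functions $v:\Gamma\to\mathbb C$ by $(Jv)(x)=\lambda_x v(x')+\beta_x v(x)+\sum_{y\in N_x}\lambda_y v(y)$. *)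

From Stdlib Require Lists.List.
From HB Require Import structures.
From mathcomp Require Import all_boot all_order all_algebra.
Set Implicit Arguments. Unset Strict Implicit. Unset Printing Implicit Defensive.
Import Order.TTheory GRing.Theory Num.Theory.
Local Open Scope ring_scope.

(* A leveled tree Gamma on vertex type V:
   lev x   = level of x,
   par x   = x' (the unique neighbour on the next level),
   ch x    = duplicate-free list enumerating N_x = {y | par y = x}. *)
Definition leveled_tree (V : Type) (lev : V -> nat) (par : V -> V)
  (ch : V -> seq V) : Prop :=
  (forall x, lev (par x) = (lev x).+1) /\
  (forall x y, Stdlib.Lists.List.In y (ch x) <-> par y = x) /\
  (forall x, Stdlib.Lists.List.NoDup (ch x)) /\
  (forall x, (1 <= lev x)%N -> ch x <> [::]) /\
  (forall x y, exists m n, iter m par x = iter n par y).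

Definition Jac (C : numClosedFieldType) (V : Type) (par : V -> V)
  (ch : V -> seq V) (lam beta : V -> C) (v : V -> C) (x : V) : C :=
  lam x * v (par x) + beta x * v x + \sum_(y <- ch x) lam y * v y.

(** Let [W x := lam x * (v x * u (par x) - u x * v (par x))] be the Wronskian of
    [v] and [u] along the edge from [x] to its parent. Subtracting [u x] times
    the eigen-equation for [v] at [x] from [v x] times the one for [u] gives
    Kirchhoff's law [W x = sum_{y in N_x} W y] at every [x <> x_0]. By induction
    on the level, [W] vanishes at every vertex off the path [(x_n)]: such a
    vertex has only off-path children, and none at level 0. Hence along the path
    [W (x_{n+1}) = W (x_n)], and [W (x_0) = 1] by the initial conditions. *)

From HB Require Import structures.
From mathcomp Require Import all_boot all_order all_algebra.
From mathcomp Require Import ring.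
Import Order.TTheory GRing.Theory Num.Theory.
Local Open Scope ring_scope.

Import Stdlib.Lists.List (In, NoDup, NoDup_cons_iff).

Section BigIn.

Variables (R : nmodType) (T : Type).

Lemma eq_bigr_In (s : seq T) (F G : T -> R) :
  (forall w, In w s -> F w = G w) -> \sum_(w <- s) F w = \sum_(w <- s) G w.
Proof.
elim: s => [|a s IH] FG; first by rewrite !big_nil.
by rewrite !big_cons FG /=; [rewrite IH // => w sw; apply: FG; right | left].
Qed.

Lemma big_In_eq0 (s : seq T) (F : T -> R) :
  (forall w, In w s -> F w = 0) -> \sum_(w <- s) F w = 0.
Proof. by move=> F0; rewrite (@eq_bigr_In s F (fun=> 0)) // big1. Qed.

Lemma big_In_single (s : seq T) (F : T -> R) (a : T) :
  NoDup s -> In a s -> (forall w, In w s -> w <> a -> F w = 0) ->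
  \sum_(w <- s) F w = F a.
Proof.
elim: s => [|b s IH] // /NoDup_cons_iff[bNs nd_s] [<-|as_] F0; rewrite big_cons.
- rewrite big_In_eq0 ?addr0 // => w ws; apply: F0; first by right.
  by move=> wb; apply: bNs; rewrite -wb.
- rewrite F0 /=; [|by left | by move=> ba; apply: bNs; rewrite ba].
  by rewrite add0r IH // => w ws; apply: F0; right.
Qed.

End BigIn.

Section Wronskian.

Context {C : numClosedFieldType} {V : Type}.
Variables (par : V -> V) (ch : V -> seq V).
Variables (lam beta : V -> C) (z : C).

Definition wronskian (v u : V -> C) (x : V) : C :=
  lam x * (v x * u (par x) - u x * v (par x)).

Lemma wronskian_kirchhoff (v u : V -> C) (x : V) :
  (forall y, In y (ch x) -> par y = x) ->
  Jac par ch lam beta v x = z * v x -> Jac par ch lam beta u x = z * u x ->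
  wronskian v u x = \sum_(y <- ch x) wronskian v u y.
Proof.
move=> ch_par; rewrite /Jac.
set Sv := \sum_(y <- ch x) lam y * v y; set Su := \sum_(y <- ch x) lam y * u y.
move=> Jv Ju.
have -> : \sum_(y <- ch x) wronskian v u y = u x * Sv - v x * Su.
  rewrite !big_distrr -sumrB; apply: eq_bigr_In => y /ch_par par_y.
  by rewrite /wronskian par_y /=; ring.
have -> : Sv = z * v x - lam x * v (par x) - beta x * v x by rewrite -Jv; ring.
have -> : Su = z * u x - lam x * u (par x) - beta x * u x by rewrite -Ju; ring.
by rewrite /wronskian; ring.
Qed.

Variables (lev : V -> nat) (xs : nat -> V) (v u : V -> C).
Hypothesis lev_par : forall x, lev (par x) = (lev x).+1.
Hypothesis ch_par : forall x y, In y (ch x) <-> par y = x.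
Hypothesis nodup_ch : forall x, NoDup (ch x).
Hypothesis lev_xs : forall n, lev (xs n) = n.
Hypothesis par_xs : forall n, par (xs n) = xs n.+1.
Hypothesis Jv : forall x, x <> xs 0%N -> Jac par ch lam beta v x = z * v x.
Hypothesis Ju : forall x, x <> xs 0%N -> Jac par ch lam beta u x = z * u x.

Let kirchhoff {x} : x <> xs 0%N ->
  wronskian v u x = \sum_(y <- ch x) wronskian v u y.
Proof.
by move=> x_neq; apply: wronskian_kirchhoff; [move=> y /ch_par | apply: Jv | apply: Ju].
Qed.

Lemma wronskian_off_path y : (forall k, y <> xs k) -> wronskian v u y = 0.
Proof.
move: {2}(lev y) (leqnn (lev y)) => m; elim: m y => [|m IH] y lev_y y_off;
  rewrite (kirchhoff (y_off 0%N)); apply: big_In_eq0 => w /ch_par par_w;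
  have := lev_par w; rewrite par_w => lev_w.
- by move: lev_y; rewrite lev_w.
- apply: IH => [|k w_xs]; first by move: lev_y; rewrite lev_w.
  by apply: (y_off k.+1); rewrite -par_w w_xs.
Qed.

Lemma wronskian_path_succ n :
  wronskian v u (xs n.+1) = wronskian v u (xs n).
Proof.
have xs_neq0 : xs n.+1 <> xs 0%N by move=> E; have := lev_xs n.+1; rewrite E lev_xs.
rewrite (kirchhoff xs_neq0) (@big_In_single _ _ _ _ (xs n)) //; first exact/ch_par.
move=> w /ch_par par_w w_neq; apply: wronskian_off_path => k w_xs; apply: w_neq.
have : lev (par w) = lev (xs n.+1) by rewrite par_w.
by rewrite w_xs lev_par !lev_xs => -[->].
Qed.

End Wronskian.

Arguments wronskian_path_succ {C V par ch lam beta z lev xs v u}.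

Theorem proposition4 (C : numClosedFieldType) (V : Type) (lev : V -> nat)
  (par : V -> V) (ch : V -> seq V) (lam beta : V -> C)
  (Htree : leveled_tree lev par ch)
  (Hlam : forall x, 0 < lam x) (Hbeta : forall x, beta x \is Num.real)
  (xs : nat -> V) (Hxlev : forall n, lev (xs n) = n)
  (Hxpath : forall n, par (xs n) = xs n.+1)
  (z : C) (Hz : z \notin Num.real) (v u : V -> C)
  (Hv0 : v (xs 0%N) = 1) (Hv1 : v (xs 1%N) = (z - beta (xs 0%N)) / lam (xs 0%N))
  (Hu0 : u (xs 0%N) = 0) (Hu1 : u (xs 1%N) = (lam (xs 0%N))^-1)
  (HJv : forall x, x <> xs 0%N -> Jac par ch lam beta v x = z * v x)
  (HJu : forall x, x <> xs 0%N -> Jac par ch lam beta u x = z * u x) :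
  forall n : nat,
    v (xs n) * u (xs n.+1) - u (xs n) * v (xs n.+1) = (lam (xs n))^-1.
Proof.
case: Htree => lev_par [ch_par [nodup_ch _]] n.
have lam_neq0 x : lam x != 0 by rewrite gt_eqF.
have W1 : wronskian par lam v u (xs n) = 1.
  elim: n => [|n IH].
    by rewrite /wronskian Hxpath Hv0 Hu0 Hu1 mul1r mul0r subr0 mulfV.
  by rewrite (wronskian_path_succ lev_par ch_par nodup_ch Hxlev Hxpath HJv HJu).
by rewrite -[RHS]mulr1 -W1 /wronskian Hxpath mulKf.
Qed.
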